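(* Let $N$ be a positive integer and let $\psi(x)=a_1x^k+\cdots+a_kx$ be a polynomial with integer coefficients with $|a_1|,\ldots,|a_k|\le\log N$. Then for any $\theta\in\mathbb{T}$, $$\sum_{x=1}^N\psi^{\Delta}(x-1)e(\theta\psi(x))=\sum_{x=1}^{\psi(N)}e(\theta x)+O\big(\theta\,\psi(N)\psi^{\Delta}(N)\big),$$ where the implied constant depends only on $k$.
   Context: $\mathbb{T}=\mathbb{R}/\mathbb{Z}$ (in the error term $\theta$ denotes a real representative), $e(x)=e^{2\pi\sqrt{-1}x}$, and for a function $f$ on $\mathbb{Z}$, $f^{\Delta}(x)=f(x+1)-f(x)$. *)

From Stdlib Require Import Reals ZArith.
From Coquelicot Require Import Coquelicot.
Open Scope R_scope.

Definition ee (t : R) : C := (cos (2 * PI * t), sin (2 * PI * t)).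

Fixpoint csum (n : nat) (f : nat -> C) : C :=
  match n with
  | O => RtoC 0
  | S m => Cplus (csum m f) (f m)
  end.

Fixpoint zsum (n : nat) (f : nat -> Z) : Z :=
  match n with
  | O => 0%Z
  | S m => (zsum m f + f m)%Z
  end.

(* psi k a x = a_1 x^k + a_2 x^(k-1) + ... + a_k x  (coefficients a 1, ..., a k). *)
Definition psi (k : nat) (a : nat -> Z) (x : Z) : Z :=
  zsum k (fun j => (a (S j) * x ^ Z.of_nat (k - j))%Z).

Definition fdiff (f : Z -> Z) (x : Z) : Z := (f (x + 1) - f x)%Z.

(* Signed interval sum: sum_{x=1}^{M} e(theta x), with the standard convention
   sum_{x=1}^{M} = - sum_{x=M+1}^{0} when M < 0 (empty sum when M = 0). *)
Definition esum_to (theta : R) (M : Z) : C :=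
  if (0 <=? M)%Z
  then csum (Z.to_nat M) (fun j => ee (theta * INR (S j)))
  else Copp (csum (Z.to_nat (- M)) (fun j => ee (theta * IZR (M + 1 + Z.of_nat j)))).

From Stdlib Require Import Reals ZArith Lra Lia FunctionalExtensionality.
From Coquelicot Require Import Coquelicot.
Open Scope R_scope.

(* Write d_j = psi(j+1) - psi(j).  The difference of the two sides telescopes into
   blocks, the j-th being sum over psi(j) < y <= psi(j+1) of e(theta psi(j+1)) - e(theta y);
   as e is (2 pi)-Lipschitz, that block is at most 2 pi |theta| d_j^2.  It remains to bound
   sum_{j<N} d_j^2 by a multiple of |psi(N)| |psi^Delta(N)|.  If a_1 = 0 the degree drops.
   Otherwise |a_1| >= 1 while every coefficient is at most ln N <= 4/5 (N - 1), so the
   leading term dominates: |psi(N)| >= |a_1| N^k / 5, |psi^Delta(N)| >= |a_1| D / 5 and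
   |d_j| <= 2 |a_1| D with D = (N+1)^k - N^k, and finally N D <= 2^k N^k. *)

Ltac C_ring := apply injective_projections; simpl; ring.

Fixpoint rsum (n : nat) (f : nat -> R) : R :=
  match n with O => 0 | S m => rsum m f + f m end.

Lemma rsum_le (n : nat) (f g : nat -> R) :
  (forall j, (j < n)%nat -> f j <= g j) -> rsum n f <= rsum n g.
Proof.
  intros Hfg; induction n as [|n IH]; simpl; [lra|].
  pose proof (Hfg n (Nat.lt_succ_diag_r n)).
  enough (rsum n f <= rsum n g) by lra.
  apply IH; intros j Hj; apply Hfg; lia.
Qed.

Lemma rsum_const (n : nat) (c : R) : rsum n (fun _ => c) = INR n * c.
Proof. induction n as [|n IH]; simpl rsum; [simpl; ring|]. rewrite IH, S_INR; ring. Qed.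

Lemma rsum_scal_l (n : nat) (c : R) (f : nat -> R) :
  rsum n (fun j => c * f j) = c * rsum n f.
Proof. induction n as [|n IH]; simpl; [ring|]. rewrite IH; ring. Qed.

Lemma csum_ext (n : nat) (f g : nat -> C) :
  (forall j, f j = g j) -> csum n f = csum n g.
Proof.
  intros Hfg; induction n as [|n IH]; simpl; [reflexivity|].
  now rewrite IH, Hfg.
Qed.

Lemma csum_succ_l (n : nat) (f : nat -> C) :
  csum (S n) f = Cplus (f O) (csum n (fun j => f (S j))).
Proof.
  revert f; induction n as [|n IH]; intros f.
  - simpl; C_ring.
  - change (csum (S (S n)) f) with (Cplus (csum (S n) f) (f (S n))).
    rewrite IH; simpl; C_ring.
Qed.

Lemma Cmod_csum_le (n : nat) (f : nat -> C) :
  Cmod (csum n f) <= rsum n (fun j => Cmod (f j)).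
Proof.
  induction n as [|n IH]; simpl; [rewrite Cmod_0; lra|].
  eapply Rle_trans; [apply Cmod_triangle|]. lra.
Qed.

Lemma Rabs_sin_le (x : R) : Rabs (sin x) <= Rabs x.
Proof.
  pose proof (bounded_variation sin cos 1 0 x) as H.
  rewrite sin_0, !Rminus_0_r, Rmult_1_l in H. apply H.
  intros t _; split; [apply is_derive_sin|].
  pose proof (COS_bound t); apply Rabs_le; lra.
Qed.

(* |e(u) - e(v)|^2 = 2 - 2 cos(2 pi (u - v)) = 4 sin^2 (pi (u - v)). *)
Lemma Cmod_ee_sub_le (u v : R) :
  Cmod (Cminus (ee u) (ee v)) <= 2 * PI * Rabs (u - v).
Proof.
  unfold ee, Cmod, Cminus, Cplus, Copp; simpl fst; simpl snd.
  set (al := 2 * PI * u); set (be := 2 * PI * v).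
  replace (2 * PI * Rabs (u - v)) with (Rabs (al - be)).
  2:{ unfold al, be; rewrite <- Rmult_minus_distr_l, Rabs_mult, (Rabs_right (2 * PI));
      [reflexivity | pose proof PI_RGT_0; lra]. }
  set (h := (al - be) / 2).
  assert (Hab : al - be = 2 * h) by (unfold h; field).
  assert (Hcos : cos (al - be) = cos al * cos be + sin al * sin be) by apply cos_minus.
  assert (Hcos2 : cos (al - be) = 1 - 2 * sin h * sin h) by (rewrite Hab; apply cos_2a_sin).
  pose proof (sin2_cos2 al); pose proof (sin2_cos2 be); unfold Rsqr in *.
  assert (Hsin : Rsqr (sin h) <= Rsqr h) by (apply Rsqr_le_abs_1, Rabs_sin_le).
  unfold Rsqr in *.
  rewrite <- sqrt_Rsqr_abs; apply sqrt_le_1_alt; unfold Rsqr; rewrite Hab; nra.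
Qed.


Lemma esum_to_succ (theta : R) (M : Z) :
  esum_to theta (M + 1) = Cplus (esum_to theta M) (ee (theta * IZR (M + 1))).
Proof.
  unfold esum_to.
  destruct (Z_lt_le_dec M (-1)) as [Hneg|Hge]; [|destruct (Z.eq_dec M (-1)) as [->|HM]].
  - replace (0 <=? M + 1)%Z with false by (symmetry; apply Z.leb_gt; lia).
    replace (0 <=? M)%Z with false by (symmetry; apply Z.leb_gt; lia).
    replace (Z.to_nat (- M)) with (S (Z.to_nat (- (M + 1)))) by lia.
    rewrite csum_succ_l.
    rewrite (csum_ext _ (fun j => ee (theta * IZR (M + 1 + Z.of_nat (S j))))
                        (fun j => ee (theta * IZR (M + 1 + 1 + Z.of_nat j)))).
    2:{ intros j; do 3 f_equal; lia. }
    replace (M + 1 + Z.of_nat 0)%Z with (M + 1)%Z by lia.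
    C_ring.
  - simpl; C_ring.
  - replace (0 <=? M + 1)%Z with true by (symmetry; apply Z.leb_le; lia).
    replace (0 <=? M)%Z with true by (symmetry; apply Z.leb_le; lia).
    replace (Z.to_nat (M + 1)) with (S (Z.to_nat M)) by lia.
    change (csum (S ?n) ?f) with (Cplus (csum n f) (f n)); cbv beta.
    rewrite S_INR, INR_IZR_INZ, Z2Nat.id, plus_IZR by lia; reflexivity.
Qed.

(* The error of replacing each term of sum_{x = p+1}^{q} e(theta x) by its last one. *)
Definition esum_gap (theta : R) (p q : Z) : C :=
  Cminus (Cmult (RtoC (IZR (q - p))) (ee (theta * IZR q)))
         (Cminus (esum_to theta q) (esum_to theta p)).

Lemma esum_gap_pred (theta : R) (p q : Z) :
  esum_gap theta (p - 1) q
  = Cplus (esum_gap theta p q) (Cminus (ee (theta * IZR q)) (ee (theta * IZR p))).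
Proof.
  unfold esum_gap.
  pose proof (esum_to_succ theta (p - 1)) as Hstep.
  replace (p - 1 + 1)%Z with p in Hstep by lia.
  rewrite Hstep, !minus_IZR; C_ring.
Qed.

Lemma quadratic_of_linear_increments (g : nat -> R) (c : R) :
  0 <= c -> g O <= 0 -> (forall n, g (S n) <= g n + c * INR (S n)) ->
  forall n, g n <= c * INR n ^ 2.
Proof.
  intros Hc H0 Hstep n; induction n as [|n IH]; [simpl; lra|].
  specialize (Hstep n); rewrite S_INR in Hstep |- *.
  pose proof (pos_INR n); nra.
Qed.

Lemma Cmod_esum_gap_le (theta : R) (p q : Z) :
  Cmod (esum_gap theta p q) <= 2 * PI * Rabs theta * IZR (q - p) ^ 2.
Proof.
  assert (Hc : 0 <= 2 * PI * Rabs theta)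
    by (pose proof PI_RGT_0; pose proof (Rabs_pos theta); nra).
  assert (Hgap_qq : esum_gap theta q q = RtoC 0)
    by (unfold esum_gap; rewrite Z.sub_diag; C_ring).
  assert (Hee : forall r, Cmod (Cminus (ee (theta * IZR q)) (ee (theta * IZR r)))
                         <= 2 * PI * Rabs theta * Rabs (IZR (q - r))).
  { intros r; eapply Rle_trans; [apply Cmod_ee_sub_le|].
    rewrite minus_IZR, <- Rmult_minus_distr_l, Rabs_mult; right; ring. }
  destruct (Z_le_gt_dec p q) as [Hpq|Hpq].
  - set (g n := Cmod (esum_gap theta (q - Z.of_nat n) q)).
    assert (Hg : g (Z.to_nat (q - p)) <= 2 * PI * Rabs theta * INR (Z.to_nat (q - p)) ^ 2).
    { apply quadratic_of_linear_increments; [exact Hc | |].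
      - unfold g; rewrite Z.sub_0_r, Hgap_qq, Cmod_0; lra.
      - intros n; unfold g.
        replace (q - Z.of_nat (S n))%Z with (q - Z.of_nat n - 1)%Z by lia.
        rewrite esum_gap_pred.
        eapply Rle_trans; [apply Cmod_triangle|].
        apply Rplus_le_compat_l; eapply Rle_trans; [apply Hee|].
        apply Rmult_le_compat_l; [exact Hc|].
        replace (q - (q - Z.of_nat n))%Z with (Z.of_nat n) by lia.
        rewrite <- INR_IZR_INZ, (Rabs_right (INR n)) by apply Rle_ge, pos_INR.
        apply le_INR; lia. }
    unfold g in Hg; rewrite INR_IZR_INZ, Z2Nat.id in Hg by lia.
    now replace (q - (q - p))%Z with p in Hg by lia.
  - set (g n := Cmod (esum_gap theta (q + Z.of_nat n) q)).
    assert (Hg : g (Z.to_nat (p - q)) <= 2 * PI * Rabs theta * INR (Z.to_nat (p - q)) ^ 2).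
    { apply quadratic_of_linear_increments; [exact Hc | |].
      - unfold g; rewrite Z.add_0_r, Hgap_qq, Cmod_0; lra.
      - intros n; unfold g.
        pose proof (esum_gap_pred theta (q + Z.of_nat (S n)) q) as Hpred.
        replace (q + Z.of_nat (S n) - 1)%Z with (q + Z.of_nat n)%Z in Hpred by lia.
        replace (esum_gap theta (q + Z.of_nat (S n)) q)
          with (Cplus (esum_gap theta (q + Z.of_nat n) q)
                      (Copp (Cminus (ee (theta * IZR q))
                                    (ee (theta * IZR (q + Z.of_nat (S n)))))))
          by (rewrite Hpred; C_ring).
        eapply Rle_trans; [apply Cmod_triangle|]; rewrite Cmod_opp.
        apply Rplus_le_compat_l; eapply Rle_trans; [apply Hee|].
        replace (q - (q + Z.of_nat (S n)))%Z with (- Z.of_nat (S n))%Z by lia.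
        rewrite Ropp_Ropp_IZR, Rabs_Ropp, <- INR_IZR_INZ, (Rabs_right (INR (S n)))
          by apply Rle_ge, pos_INR.
        lra. }
    unfold g in Hg; rewrite INR_IZR_INZ, Z2Nat.id in Hg by lia.
    replace (q + (p - q))%Z with p in Hg by lia.
    replace (IZR (q - p) ^ 2) with (IZR (p - q) ^ 2) by (rewrite !minus_IZR; ring).
    exact Hg.
Qed.


Lemma csum_sub_esum_to_telescope (theta : R) (P : nat -> Z) (F : nat -> C) (N : nat) :
  P O = 0%Z ->
  Cminus (csum N F) (esum_to theta (P N))
  = csum N (fun j => Cminus (F j) (Cminus (esum_to theta (P (S j))) (esum_to theta (P j)))).
Proof.
  intros HP0; induction N as [|N IH].
  - simpl; rewrite HP0; unfold esum_to; simpl; C_ring.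
  - change (csum (S N) ?f) with (Cplus (csum N f) (f N)); rewrite <- IH; C_ring.
Qed.

Lemma zsum_succ_l (n : nat) (f : nat -> Z) :
  zsum (S n) f = (f O + zsum n (fun j => f (S j)))%Z.
Proof.
  revert f; induction n as [|n IH]; intros f; simpl in *; [lia|].
  rewrite IH; simpl; lia.
Qed.

Lemma psi_succ (m : nat) (a : nat -> Z) (x : Z) :
  psi (S m) a x = (a 1%nat * x ^ Z.of_nat (S m) + psi m (fun i => a (S i)) x)%Z.
Proof. unfold psi; now rewrite zsum_succ_l. Qed.

Lemma fdiff_psi_succ (m : nat) (a : nat -> Z) (x : Z) :
  fdiff (psi (S m) a) x
  = (a 1%nat * ((x + 1) ^ Z.of_nat (S m) - x ^ Z.of_nat (S m))
     + fdiff (psi m (fun i => a (S i))) x)%Z.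
Proof. unfold fdiff; rewrite !psi_succ; ring. Qed.

Lemma psi_at_0 (k : nat) (a : nat -> Z) : psi k a 0 = 0%Z.
Proof.
  revert a; induction k as [|k IH]; intros a; [reflexivity|].
  rewrite psi_succ, IH, Z.pow_0_l by lia; lia.
Qed.

Lemma IZR_pow_of_nat (z : Z) (n : nat) : IZR (z ^ Z.of_nat n) = IZR z ^ n.
Proof. now rewrite <- pow_IZR. Qed.

Fixpoint pow_sum (m : nat) (x : R) : R :=
  match m with O => 0 | S m' => x ^ S m' + pow_sum m' x end.

Definition dpow (m : nat) (x : R) : R := (x + 1) ^ m - x ^ m.

Lemma pow_sum_nonneg (m : nat) (x : R) : 0 <= x -> 0 <= pow_sum m x.
Proof.
  intros Hx; induction m as [|m IH]; simpl; [lra|].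
  pose proof (pow_le x (S m) Hx); simpl in *; lra.
Qed.

Lemma pow_sum_geometric (m : nat) (x : R) : (x - 1) * pow_sum m x = x ^ S m - x.
Proof. induction m as [|m IH]; simpl in *; [ring|]. rewrite Rmult_plus_distr_l, IH; ring. Qed.

Lemma pow_sum_le (m : nat) (x : R) : 1 <= x -> (x - 1) * pow_sum m x <= x ^ S m.
Proof. intros Hx; rewrite pow_sum_geometric; lra. Qed.

Lemma dpow_succ (m : nat) (x : R) : dpow (S m) x = (x + 1) * dpow m x + x ^ m.
Proof. unfold dpow; simpl; ring. Qed.

Lemma dpow_nonneg_incr (m : nat) (x y : R) :
  0 <= x -> x <= y -> 0 <= dpow m x /\ dpow m x <= dpow m y.
Proof.
  intros Hx Hxy; induction m as [|m [IH0 IH1]]; [unfold dpow; simpl; lra|].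
  rewrite !dpow_succ.
  pose proof (pow_le x m Hx); pose proof (pow_incr x y m (conj Hx Hxy)).
  split; nra.
Qed.

(* x * (pow_sum m (x+1) - pow_sum m x) = dpow (S m) x - 1 - pow_sum m x, by pow_sum_geometric. *)
Lemma pow_sum_diff_le (m : nat) (x : R) :
  0 <= x -> x * (pow_sum m (x + 1) - pow_sum m x) <= dpow (S m) x.
Proof.
  intros Hx.
  pose proof (pow_sum_geometric m (x + 1)); pose proof (pow_sum_geometric m x).
  pose proof (pow_sum_nonneg m x Hx).
  unfold dpow; replace (x + 1 - 1) with x in * by ring; nra.
Qed.

Lemma pow_sum_diff_nonneg_incr (m : nat) (x y : R) :
  0 <= x -> x <= y ->
  0 <= pow_sum m (x + 1) - pow_sum m x
  /\ pow_sum m (x + 1) - pow_sum m x <= pow_sum m (y + 1) - pow_sum m y.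
Proof.
  intros Hx Hxy; induction m as [|m [IH0 IH1]]; simpl; [lra|].
  pose proof (dpow_nonneg_incr (S m) x y Hx Hxy) as Hd; unfold dpow in Hd; simpl in Hd.
  lra.
Qed.

Lemma dpow_succ_le (m : nat) (x : R) : 1 <= x -> dpow (S m) x <= (2 ^ S m - 1) * x ^ m.
Proof.
  intros Hx; induction m as [|m IH]; [unfold dpow; simpl; lra|].
  rewrite dpow_succ.
  pose proof (pow_le x m ltac:(lra)); pose proof (pow_R1_Rle 2 (S m) ltac:(lra)).
  pose proof (proj1 (dpow_nonneg_incr (S m) x x ltac:(lra) (Rle_refl x))).
  simpl in *; nra.
Qed.

Lemma Rabs_psi_le (m : nat) (b : nat -> Z) (B : R) (x : Z) :
  (0 <= x)%Z -> (forall i, (1 <= i <= m)%nat -> Rabs (IZR (b i)) <= B) ->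
  Rabs (IZR (psi m b x)) <= B * pow_sum m (IZR x).
Proof.
  revert b; induction m as [|m IH]; intros b Hx Hb.
  - unfold psi; simpl; rewrite Rabs_R0; lra.
  - rewrite psi_succ, plus_IZR, mult_IZR, IZR_pow_of_nat; cbn [pow_sum].
    pose proof (Hb 1%nat ltac:(lia)) as Hb1.
    pose proof (IH (fun i => b (S i)) Hx ltac:(intros i Hi; apply Hb; lia)).
    pose proof (pow_le (IZR x) (S m) (IZR_le _ _ Hx)) as Hpow.
    eapply Rle_trans; [apply Rabs_triang|].
    rewrite Rabs_mult, (Rabs_right (IZR x ^ S m)) by lra.
    pose proof (Rmult_le_compat_r _ _ _ Hpow Hb1); lra.
Qed.

Lemma Rabs_fdiff_psi_le (m : nat) (b : nat -> Z) (B : R) (x : Z) :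
  (0 <= x)%Z -> (forall i, (1 <= i <= m)%nat -> Rabs (IZR (b i)) <= B) ->
  Rabs (IZR (fdiff (psi m b) x)) <= B * (pow_sum m (IZR x + 1) - pow_sum m (IZR x)).
Proof.
  revert b; induction m as [|m IH]; intros b Hx Hb.
  - unfold fdiff, psi; simpl; rewrite Rabs_R0; lra.
  - rewrite fdiff_psi_succ, plus_IZR, mult_IZR, minus_IZR, !IZR_pow_of_nat, plus_IZR.
    cbn [pow_sum].
    pose proof (Hb 1%nat ltac:(lia)) as Hb1.
    pose proof (IH (fun i => b (S i)) Hx ltac:(intros i Hi; apply Hb; lia)).
    pose proof (proj1 (dpow_nonneg_incr (S m) (IZR x) (IZR x) (IZR_le _ _ Hx) (Rle_refl _)))
      as Hd; unfold dpow in Hd.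
    eapply Rle_trans; [apply Rabs_triang|].
    rewrite Rabs_mult, (Rabs_right ((IZR x + 1) ^ S m - IZR x ^ S m)) by lra.
    pose proof (Rmult_le_compat_r _ _ _ Hd Hb1); lra.
Qed.

Lemma Rabs_lead_ge (c M T : R) :
  1 <= Rabs c -> 0 <= M -> Rabs T <= 4 / 5 * M -> Rabs c * M / 5 <= Rabs (c * M + T).
Proof.
  intros Hc HM HT.
  pose proof (Rabs_triang_inv (c * M) (- T)) as Hinv.
  rewrite Rabs_Ropp, Rabs_mult, (Rabs_right M) in Hinv by lra.
  replace (c * M - - T) with (c * M + T) in Hinv by ring.
  pose proof (Rmult_le_compat_r M 1 (Rabs c) HM Hc); lra.
Qed.

Lemma ln_le_sub_1 (y : R) : 0 < y -> ln y <= y - 1.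
Proof.
  intros Hy; destruct (Req_dec (ln y) 0) as [Hln|Hln].
  - assert (y = 1) by (rewrite <- (exp_ln y Hy), Hln; apply exp_0); lra.
  - pose proof (exp_ineq1 _ Hln) as H; rewrite exp_ln in H; lra.
Qed.

(* ln n = 2 ln (sqrt n) <= 2 (sqrt n - 1), and sqrt n >= 3/2 once ln n >= 1. *)
Lemma ln_le_4_5_sub_1 (n : R) : 0 < n -> 1 <= ln n -> ln n <= 4 / 5 * (n - 1).
Proof.
  intros Hn Hln.
  set (r := sqrt n).
  assert (Hr : 0 < r) by (apply sqrt_lt_R0; lra).
  assert (Hrr : r * r = n) by (apply sqrt_sqrt; lra).
  assert (ln n = ln r + ln r) by (rewrite <- Hrr; apply ln_mult; lra).
  pose proof (ln_le_sub_1 r Hr); nra.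
Qed.

Section NonzeroLeadingCoefficient.

Variables (m : nat) (a : nat -> Z) (N : nat).
Hypothesis lead_neq0 : a 1%nat <> 0%Z.
Hypothesis N_ge1 : (1 <= N)%nat.
Hypothesis coef_le_ln : forall i, (1 <= i <= S m)%nat -> Rabs (IZR (a i)) <= ln (INR N).

Lemma INR_N_ge1 : 1 <= INR N.
Proof. apply (le_INR 1); exact N_ge1. Qed.

Lemma Rabs_lead_ge1 : 1 <= Rabs (IZR (a 1%nat)).
Proof. rewrite <- abs_IZR; apply IZR_le; lia. Qed.

Lemma tail_coef_le_ln : forall i, (1 <= i <= m)%nat -> Rabs (IZR (a (S i))) <= ln (INR N).
Proof. intros i Hi; apply coef_le_ln; lia. Qed.

(* Since the integer a_1 is nonzero and |a_1| <= ln N, the hypothesis forces ln N >= 1. *)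
Lemma ln_N_le : ln (INR N) <= 4 / 5 * (INR N - 1).
Proof.
  pose proof Rabs_lead_ge1; pose proof (coef_le_ln 1 ltac:(lia)); pose proof INR_N_ge1.
  apply ln_le_4_5_sub_1; lra.
Qed.

Lemma Rabs_psi_N_ge :
  Rabs (IZR (a 1%nat)) * INR N ^ S m / 5 <= Rabs (IZR (psi (S m) a (Z.of_nat N))).
Proof.
  rewrite psi_succ, plus_IZR, mult_IZR, IZR_pow_of_nat, <- INR_IZR_INZ.
  pose proof INR_N_ge1; pose proof ln_N_le.
  apply Rabs_lead_ge; [exact Rabs_lead_ge1 | apply pow_le; lra |].
  pose proof (Rabs_psi_le m _ _ (Z.of_nat N) (Nat2Z.is_nonneg N) tail_coef_le_ln) as Htail.
  rewrite <- INR_IZR_INZ in Htail.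
  pose proof (pow_sum_le m (INR N) INR_N_ge1); pose proof (pow_sum_nonneg m (INR N) ltac:(lra)).
  nra.
Qed.

Lemma Rabs_fdiff_psi_N_ge :
  Rabs (IZR (a 1%nat)) * dpow (S m) (INR N) / 5
  <= Rabs (IZR (fdiff (psi (S m) a) (Z.of_nat N))).
Proof.
  rewrite fdiff_psi_succ, plus_IZR, mult_IZR, minus_IZR, !IZR_pow_of_nat, plus_IZR,
    <- INR_IZR_INZ.
  pose proof INR_N_ge1; pose proof ln_N_le.
  pose proof (dpow_nonneg_incr (S m) (INR N) (INR N) ltac:(lra) (Rle_refl _)) as [Hd _].
  apply Rabs_lead_ge; [exact Rabs_lead_ge1 | exact Hd |].
  pose proof (Rabs_fdiff_psi_le m _ _ (Z.of_nat N) (Nat2Z.is_nonneg N) tail_coef_le_ln)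
    as Htail.
  rewrite <- INR_IZR_INZ in Htail.
  pose proof (pow_sum_diff_le m (INR N) ltac:(lra)).
  pose proof (pow_sum_diff_nonneg_incr m (INR N) (INR N) ltac:(lra) (Rle_refl _)) as [Hs _].
  unfold dpow in *; nra.
Qed.

Lemma Rabs_fdiff_psi_le_N (j : nat) :
  (j <= N)%nat ->
  Rabs (IZR (fdiff (psi (S m) a) (Z.of_nat j))) <= 2 * Rabs (IZR (a 1%nat)) * dpow (S m) (INR N).
Proof.
  intros HjN.
  assert (Hj : 0 <= INR j <= INR N) by (split; [apply pos_INR | apply le_INR; lia]).
  rewrite fdiff_psi_succ, plus_IZR, mult_IZR, minus_IZR, !IZR_pow_of_nat, plus_IZR,
    <- INR_IZR_INZ.
  pose proof INR_N_ge1; pose proof ln_N_le; pose proof Rabs_lead_ge1.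
  pose proof (coef_le_ln 1 ltac:(lia)).
  pose proof (Rabs_fdiff_psi_le m _ _ (Z.of_nat j) (Nat2Z.is_nonneg j) tail_coef_le_ln)
    as Htail.
  rewrite <- INR_IZR_INZ in Htail.
  pose proof (pow_sum_diff_le m (INR N) ltac:(lra)).
  pose proof (pow_sum_diff_nonneg_incr m (INR j) (INR N) ltac:(lra) ltac:(lra)) as [Hs0 Hs1].
  pose proof (dpow_nonneg_incr (S m) (INR j) (INR N) ltac:(lra) ltac:(lra)) as [Hd0 Hd1].
  change ((INR j + 1) ^ S m - INR j ^ S m) with (dpow (S m) (INR j)).
  eapply Rle_trans; [apply Rabs_triang|].
  rewrite Rabs_mult, (Rabs_right (dpow (S m) (INR j))) by lra.
  pose proof (Rmult_le_compat_l (Rabs (IZR (a 1%nat))) _ _ ltac:(lra) Hd1).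
  assert (ln (INR N) * (pow_sum m (INR j + 1) - pow_sum m (INR j))
          <= INR N * (pow_sum m (INR N + 1) - pow_sum m (INR N)))
    by (apply Rmult_le_compat; lra).
  nra.
Qed.

Lemma sum_sq_fdiff_psi_le_lead :
  rsum N (fun j => IZR (fdiff (psi (S m) a) (Z.of_nat j)) ^ 2)
  <= 100 * 2 ^ S m * (Rabs (IZR (psi (S m) a (Z.of_nat N)))
                      * Rabs (IZR (fdiff (psi (S m) a) (Z.of_nat N)))).
Proof.
  pose proof INR_N_ge1 as Hn; pose proof Rabs_lead_ge1 as HA.
  pose proof Rabs_psi_N_ge; pose proof Rabs_fdiff_psi_N_ge.
  pose proof (proj1 (dpow_nonneg_incr (S m) (INR N) (INR N) ltac:(lra) (Rle_refl _))) as HD.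
  pose proof (dpow_succ_le m (INR N) Hn).
  set (A := Rabs (IZR (a 1%nat))) in *; set (n := INR N) in *; set (D := dpow (S m) n) in *.
  assert (HnD : n * D <= 2 ^ S m * n ^ S m).
  { pose proof (pow_le n m ltac:(lra)).
    apply Rle_trans with (n * ((2 ^ S m - 1) * n ^ m)); [apply Rmult_le_compat_l; lra|].
    simpl; nra. }
  apply Rle_trans with (rsum N (fun _ => (2 * A * D) ^ 2)).
  { apply rsum_le; intros j Hj.
    rewrite <- (pow2_abs (IZR _)); apply pow_incr; split; [apply Rabs_pos|].
    apply Rabs_fdiff_psi_le_N; lia. }
  rewrite rsum_const; fold n.
  pose proof (pow_le n (S m) ltac:(lra)); pose proof (pow_le 2 (S m) ltac:(lra)).
  apply Rle_trans with (4 * (A * A * D) * (2 ^ S m * n ^ S m)).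
  { replace (n * (2 * A * D) ^ 2) with (4 * (A * A * D) * (n * D)) by ring.
    apply Rmult_le_compat_l; [nra | exact HnD]. }
  apply Rle_trans with (100 * 2 ^ S m * ((A * n ^ S m / 5) * (A * D / 5))); [right; field|].
  apply Rmult_le_compat_l; [lra|].
  apply Rmult_le_compat; nra.
Qed.

End NonzeroLeadingCoefficient.

(* A vanishing leading coefficient lowers the degree, so induction on k handles it. *)
Lemma sum_sq_fdiff_psi_le (k : nat) (a : nat -> Z) (N : nat) :
  (1 <= N)%nat ->
  (forall i, (1 <= i <= k)%nat -> Rabs (IZR (a i)) <= ln (INR N)) ->
  rsum N (fun j => IZR (fdiff (psi k a) (Z.of_nat j)) ^ 2)
  <= 100 * 2 ^ k * (Rabs (IZR (psi k a (Z.of_nat N)))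
                    * Rabs (IZR (fdiff (psi k a) (Z.of_nat N)))).
Proof.
  revert a; induction k as [|m IH]; intros a HN Ha.
  - unfold fdiff, psi; simpl.
    rewrite (rsum_le N _ (fun _ => 0)) by (intros; simpl; lra).
    rewrite rsum_const, Rabs_R0; lra.
  - destruct (Z.eq_dec (a 1%nat) 0) as [Hlead|Hlead];
      [|exact (sum_sq_fdiff_psi_le_lead m a N Hlead HN Ha)].
    assert (Hpsi : psi (S m) a = psi m (fun i => a (S i))).
    { apply functional_extensionality; intros x; rewrite psi_succ, Hlead; lia. }
    rewrite Hpsi.
    eapply Rle_trans; [apply IH; [exact HN | intros i Hi; apply Ha; lia]|].
    apply Rmult_le_compat_r; [apply Rmult_le_pos; apply Rabs_pos|].
    pose proof (pow_le 2 m ltac:(lra)); simpl; lra.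
Qed.

Theorem lemma2p3 :
  forall k : nat, (1 <= k)%nat ->
  exists Ck : R, 0 < Ck /\
  forall (N : nat) (a : nat -> Z) (theta : R),
    (1 <= N)%nat ->
    (forall i : nat, (1 <= i <= k)%nat -> Rabs (IZR (a i)) <= ln (INR N)) ->
    Cmod (Cminus
            (csum N (fun j =>
               Cmult (RtoC (IZR (fdiff (psi k a) (Z.of_nat j))))
                     (ee (theta * IZR (psi k a (Z.of_nat (S j)))))))
            (esum_to theta (psi k a (Z.of_nat N))))
    <= Ck * (Rabs theta * Rabs (IZR (psi k a (Z.of_nat N)))
                        * Rabs (IZR (fdiff (psi k a) (Z.of_nat N)))).
Proof.
  intros k _; exists (2 * PI * (100 * 2 ^ k)); split.
  { pose proof PI_RGT_0; pose proof (pow_lt 2 k ltac:(lra)); nra. }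
  intros N a theta HN Ha.
  assert (Hc : 0 <= 2 * PI * Rabs theta)
    by (pose proof PI_RGT_0; pose proof (Rabs_pos theta); nra).
  rewrite (csum_sub_esum_to_telescope theta (fun j => psi k a (Z.of_nat j))) by apply psi_at_0.
  eapply Rle_trans; [apply Cmod_csum_le|].
  apply Rle_trans
    with (rsum N (fun j => 2 * PI * Rabs theta * IZR (fdiff (psi k a) (Z.of_nat j)) ^ 2)).
  { apply rsum_le; intros j _.
    replace (fdiff (psi k a) (Z.of_nat j))
      with (psi k a (Z.of_nat (S j)) - psi k a (Z.of_nat j))%Z
      by (unfold fdiff; f_equal; f_equal; lia).
    apply Cmod_esum_gap_le. }
  rewrite rsum_scal_l.
  pose proof (Rmult_le_compat_l _ _ _ Hc (sum_sq_fdiff_psi_le k a N HN Ha)).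
  lra.
Qed.
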